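(* For every two-player stage game $G$: if $G\in\mathcal{G}_{LS}^{m,p}$ then $G\in\mathcal{G}_{LS}^{m,m}$; that is, $\mathcal{G}_{LS}^{m,p}\subseteq\mathcal{G}_{LS}^{m,m}$.
   Context: A two-player stage game $G$ has finite nonempty action sets $A_1,A_2$ and payoffs $u_1,u_2:A_1\times A_2\to\mathbb{R}$, extended to mixed strategies by expectation. $G(T)$ is the $T$-round repetition with realized actions observed each round and payoffs the expected sum of stage payoffs; an SPE of $G(T)$ is a strategy profile whose continuation after every history of length $k<T$ is a Nash equilibrium of $G(T-k)$. Regimes: pure-pure ($p,p$): both players restricted to actions (in the stage game and in every round, including deviations); mixed-pure ($m,p$): player 1 may mix, player 2 uses only actions; mixed-mixed ($m,m$): both may mix. For regime $r$, $\mathrm{Nash}^r(G)$ is the set of stage-game profiles available in $r$ from which no player can profitably deviate unilaterally to a strategy available in $r$. Locally suboptimal behavior occurs in an SPE $\mu$ of $G(T)$ (regime $r$) if for some history $h$ of length $k<T$, $(\mu_1(h),\mu_2(h))\notin\mathrm{Nash}^r(G)$. $\mathcal{G}_{LS}^r$ is the set of stage games $G$ for which there exist $T\ge1$ and an SPE of $G(T)$ in regime $r$ in which locally suboptimal behavior occurs. *)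

From mathcomp Require Import all_boot all_order all_algebra.
From mathcomp Require Import reals.
Set Implicit Arguments. Unset Strict Implicit. Unset Printing Implicit Defensive.
Import Order.TTheory GRing.Theory Num.Theory.
Local Open Scope ring_scope.

Section RepeatedGames.
Variable R : realType.
Variables A1 A2 : finType.

Definition is_mixed (A : finType) (p : A -> R) : Prop :=
  (forall a, 0 <= p a) /\ \sum_(a : A) p a = 1.

Definition is_pure (A : finType) (p : A -> R) : Prop :=
  exists a0 : A, forall a, p a = (a == a0)%:R.

Definition avail (mix : bool) (A : finType) (p : A -> R) : Prop :=
  if mix then is_mixed p else is_pure p.

(* Regime: (player 1 may mix, player 2 may mix). *)
Definition regime := (bool * bool)%type.
Definition reg_pp : regime := (false, false).
Definition reg_mp : regime := (true, false).
Definition reg_mm : regime := (true, true).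

Definition stage_payoff (u : A1 -> A2 -> R) (p1 : A1 -> R) (p2 : A2 -> R) : R :=
  \sum_(a1 : A1) \sum_(a2 : A2) p1 a1 * p2 a2 * u a1 a2.

Definition stage_Nash (r : regime) (u1 u2 : A1 -> A2 -> R)
  (p1 : A1 -> R) (p2 : A2 -> R) : Prop :=
  [/\ avail r.1 p1, avail r.2 p2,
      (forall q1 : A1 -> R, avail r.1 q1 -> stage_payoff u1 q1 p2 <= stage_payoff u1 p1 p2)
    & (forall q2 : A2 -> R, avail r.2 q2 -> stage_payoff u2 p1 q2 <= stage_payoff u2 p1 p2)].

(* Histories: sequences of realized action profiles (oldest first). *)
Definition history := seq (A1 * A2).

Definition strat1 := history -> A1 -> R.
Definition strat2 := history -> A2 -> R.

Definition strat_avail (mix : bool) (A : finType) (s : history -> A -> R) : Prop :=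
  forall h, avail mix (s h).

Fixpoint value (u : A1 -> A2 -> R) (s1 : strat1) (s2 : strat2) (h : history)
  (n : nat) : R :=
  match n with
  | 0 => 0
  | n'.+1 => \sum_(a1 : A1) \sum_(a2 : A2)
              s1 h a1 * s2 h a2 * (u a1 a2 + value u s1 s2 (rcons h (a1, a2)) n')
  end.

Definition rep_payoff (u : A1 -> A2 -> R) (s1 : strat1) (s2 : strat2) (n : nat) : R :=
  value u s1 s2 [::] n.

Definition rep_Nash (r : regime) (u1 u2 : A1 -> A2 -> R) (n : nat)
  (s1 : strat1) (s2 : strat2) : Prop :=
  [/\ strat_avail r.1 s1, strat_avail r.2 s2,
      (forall t1 : strat1, strat_avail r.1 t1 ->
          rep_payoff u1 t1 s2 n <= rep_payoff u1 s1 s2 n)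
    & (forall t2 : strat2, strat_avail r.2 t2 ->
          rep_payoff u2 s1 t2 n <= rep_payoff u2 s1 s2 n)].

Definition cont (A : finType) (s : history -> A -> R) (h : history) : history -> A -> R :=
  fun h' => s (h ++ h').

Definition SPE (r : regime) (u1 u2 : A1 -> A2 -> R) (T : nat)
  (s1 : strat1) (s2 : strat2) : Prop :=
  [/\ strat_avail r.1 s1, strat_avail r.2 s2 &
      forall h : history, (size h < T)%N ->
        rep_Nash r u1 u2 (T - size h) (cont s1 h) (cont s2 h)].

Definition locally_suboptimal (r : regime) (u1 u2 : A1 -> A2 -> R) (T : nat)
  (s1 : strat1) (s2 : strat2) : Prop :=
  exists h : history, (size h < T)%N /\ ~ stage_Nash r u1 u2 (s1 h) (s2 h).

Definition in_GLS (r : regime) (u1 u2 : A1 -> A2 -> R) : Prop :=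
  exists T : nat, (1 <= T)%N /\
    exists (s1 : strat1) (s2 : strat2),
      SPE r u1 u2 T s1 s2 /\ locally_suboptimal r u1 u2 T s1 s2.

End RepeatedGames.

From mathcomp Require Import all_boot all_order all_algebra.
From mathcomp Require Import reals.
Set Implicit Arguments. Unset Strict Implicit. Unset Printing Implicit Defensive.
Import Order.TTheory GRing.Theory Num.Theory.

(* The key fact is that, against any fixed behavior strategy s1 of player 1,
   mixing never helps player 2 in G(n).  Backward induction defines the
   best-reply value  br_value k h  (the best expected payoff over the k
   remaining rounds after history h) together with a pure strategy that
   picks, after every history, an action maximising the one-round-ahead
   continuation payoff.  Every mixed strategy earns at most br_value, since a
   probability average never exceeds the maximum, and the pure strategy earns
   exactly br_value.  Hence every mixed deviation is dominated by a pure one,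
   so each continuation Nash equilibrium of the (m,p) regime is one of the
   (m,m) regime, and the SPE carries over.  Conversely, a stage-game Nash
   profile of the (m,m) regime with a pure second component is one of the
   (m,p) regime, because pure deviations are particular mixed ones. *)

Local Open Scope ring_scope.

Section MixedStrategies.
Variable R : realType.

Lemma pure_is_mixed (A : finType) (p : A -> R) : is_pure p -> is_mixed p.
Proof.
case=> a0 Hp; split=> [a|]; first by rewrite Hp ler0n.
rewrite (bigD1 a0) //= Hp eqxx big1 ?addr0 // => a /negbTE Ha.
by rewrite Hp Ha.
Qed.

Lemma avail_mixed (A : finType) (mix : bool) (p : A -> R) :
  avail mix p -> avail true p.
Proof. by case: mix => //; apply: pure_is_mixed. Qed.

Lemma expect_point_mass (A : finType) (b : A) (f : A -> R) :
  \sum_(a : A) (a == b)%:R * f a = f b.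
Proof.
rewrite (bigD1 b) //= eqxx mul1r big1 ?addr0 // => a /negbTE Ha.
by rewrite Ha mul0r.
Qed.

Lemma expect_le_bound (A : finType) (p f : A -> R) (M : R) :
  is_mixed p -> (forall a, f a <= M) -> \sum_(a : A) p a * f a <= M.
Proof.
case=> p_ge0 p_sum f_le.
rewrite -[leRHS]mul1r -p_sum mulr_suml.
by apply: ler_sum => a _; apply: ler_wpM2l.
Qed.

End MixedStrategies.

(* Dynamic programming for player 2's best reply to a fixed strategy s1 of
   player 1; a0 is any action of player 2, used as the default of argmax. *)
Section BestReply.
Variable R : realType.
Variables A1 A2 : finType.
Variable u : A1 -> A2 -> R.
Variable s1 : strat1 R A1 A2.
Variable a0 : A2.

Definition step_payoff (V : history A1 A2 -> R) (h : history A1 A2) (a2 : A2) : R :=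
  \sum_(a1 : A1) s1 h a1 * (u a1 a2 + V (rcons h (a1, a2))).

Definition best_action (V : history A1 A2 -> R) (h : history A1 A2) : A2 :=
  [arg max_(a > a0) step_payoff V h a]%O.

Lemma best_action_max V h a : step_payoff V h a <= step_payoff V h (best_action V h).
Proof.
rewrite /best_action.
by case: (@arg_maxP _ R A2 a0 xpredT (step_payoff V h) isT) => b _; apply.
Qed.

Fixpoint br_value (k : nat) (h : history A1 A2) : R :=
  if k is k'.+1 then step_payoff (br_value k') h (best_action (br_value k') h)
  else 0.

Definition br_strategy (N : nat) : strat2 R A1 A2 :=
  fun h a => (a == best_action (br_value (N - size h).-1) h)%:R.

Lemma br_strategy_pure N : strat_avail false (br_strategy N).
Proof. by move=> h; exists (best_action (br_value (N - size h).-1) h). Qed.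

Hypothesis s1_ge0 : forall h a, 0 <= s1 h a.

Lemma value_step_le (t2 : strat2 R A1 A2) h k :
  (forall h', value u s1 t2 h' k <= br_value k h') ->
  (forall a, 0 <= t2 h a) ->
  value u s1 t2 h k.+1 <= \sum_(a2 : A2) t2 h a2 * step_payoff (br_value k) h a2.
Proof.
move=> value_le t2_ge0 /=; rewrite exchange_big /=.
apply: ler_sum => a2 _; rewrite /step_payoff mulr_sumr.
apply: ler_sum => a1 _; rewrite mulrCA -mulrA.
by apply: ler_wpM2l => //; apply: ler_wpM2l => //; rewrite lerD2l.
Qed.

Lemma value_le_br_value (t2 : strat2 R A1 A2) :
  strat_avail true t2 -> forall k h, value u s1 t2 h k <= br_value k h.
Proof.
move=> t2_mixed; elim=> [|k IH] h //=.
apply: le_trans (value_step_le IH (proj1 (t2_mixed h))) _.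
by apply: expect_le_bound (t2_mixed h) _ => a; apply: best_action_max.
Qed.

Lemma value_br_strategy N k h :
  (size h + k)%N = N -> value u s1 (br_strategy N) h k = br_value k h.
Proof.
elim: k h => [|k IH] h Hsize //=.
have br_h a : br_strategy N h a = (a == best_action (br_value k) h)%:R.
  by rewrite /br_strategy -Hsize addnC addnK.
rewrite exchange_big /=.
rewrite -(expect_point_mass (best_action (br_value k) h) (step_payoff (br_value k) h)).
apply: eq_bigr => a2 _; rewrite /step_payoff mulr_sumr; apply: eq_bigr => a1 _.
by rewrite br_h IH ?size_rcons ?addSnnS // -mulrA mulrCA.
Qed.

Lemma pure_best_reply N (t2 : strat2 R A1 A2) :
  strat_avail true t2 ->
  rep_payoff u s1 t2 N <= rep_payoff u s1 (br_strategy N) N.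
Proof.
move=> t2_mixed; rewrite /rep_payoff value_br_strategy //.
exact: value_le_br_value.
Qed.

End BestReply.

Section RegimeComparison.
Variable R : realType.
Variables A1 A2 : finType.
Variables u1 u2 : A1 -> A2 -> R.
Variable a0 : A2.

Lemma rep_Nash_mp_mm n (s1 : strat1 R A1 A2) (s2 : strat2 R A1 A2) :
  rep_Nash reg_mp u1 u2 n s1 s2 -> rep_Nash reg_mm u1 u2 n s1 s2.
Proof.
case=> s1_mixed s2_pure dev1 dev2; split=> // [h|t2 t2_mixed].
  exact: avail_mixed (s2_pure h).
have s1_ge0 h a : 0 <= s1 h a by case: (s1_mixed h).
apply: le_trans (pure_best_reply u2 a0 s1_ge0 n t2_mixed) _.
exact/dev2/br_strategy_pure.
Qed.

Lemma SPE_mp_mm T (s1 : strat1 R A1 A2) (s2 : strat2 R A1 A2) :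
  SPE reg_mp u1 u2 T s1 s2 -> SPE reg_mm u1 u2 T s1 s2.
Proof.
case=> s1_mixed s2_pure cont_Nash; split=> // [h|h hT].
  exact: avail_mixed (s2_pure h).
exact/rep_Nash_mp_mm/cont_Nash.
Qed.

Lemma stage_Nash_mm_mp (p1 : A1 -> R) (p2 : A2 -> R) :
  is_pure p2 -> stage_Nash reg_mm u1 u2 p1 p2 -> stage_Nash reg_mp u1 u2 p1 p2.
Proof.
move=> p2_pure [p1_mixed _ dev1 dev2]; split=> // q2 /pure_is_mixed.
exact: dev2.
Qed.

End RegimeComparison.

Theorem mainTheorem13 (R : realType) (A1 A2 : finType)
  (u1 u2 : A1 -> A2 -> R) :
  (0 < #|A1|)%N -> (0 < #|A2|)%N ->
  in_GLS reg_mp u1 u2 -> in_GLS reg_mm u1 u2.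
Proof.
move=> _ /card_gt0P [a0 _] [T [T_ge1 [s1 [s2 [spe [h [hT not_Nash]]]]]]].
exists T; split=> //; exists s1, s2; split; first exact: SPE_mp_mm a0 _ _ _ spe.
exists h; split=> // Nash_mm; apply: not_Nash.
have [_ s2_pure _] := spe.
exact: stage_Nash_mm_mp (s2_pure h) Nash_mm.
Qed.
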